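(* Let $f\in\mathbb{R}[x_1,\dots,x_n]$ be a homogeneous polynomial of degree $d$, let $A=A(f)=\bigoplus_{i=0}^d A_i$, let $k$ be an integer with $0\le k\le \lfloor d/2\rfloor$, let $B_k=\{\alpha_1,\dots,\alpha_m\}$ be homogeneous elements of degree $k$ of $Q$ whose images form an $\mathbb{R}$-basis of $A_k$, and let $\bm F=(F_1,\dots,F_m)^{\mathrm T}\in\mathbb{R}[x_1,\dots,x_n]^m$ satisfy $\bm H_{B_k}(f)\,\bm F=\bm 0$. Then: (1) For every $(a_1,\dots,a_n)\in\mathbb{R}^n$, setting $\ell=a_1\partial_1+\dots+a_n\partial_n\in A_1$ and $\xi=\sum_{i=1}^m F_i(a_1,\dots,a_n)\,\alpha_i\in A_k$, the element $\xi$ lies in the kernel of the multiplication map $\times\ell^{d-2k}\colon A_k\to A_{d-k}$. (2) $\sum_{i=1}^m F_i\cdot(\alpha_i f)=0$ as a polynomial in $\mathbb{R}[x_1,\dots,x_n]$.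
   Context: Let $Q=\mathbb{R}[\partial_1,\dots,\partial_n]$ with $\partial_i=\partial/\partial x_i$, acting on $\mathbb{R}[x_1,\dots,x_n]$ by differentiation. For a homogeneous polynomial $f$ of degree $d$, $\operatorname{Ann}_Q(f)=\{\alpha\in Q\mid \alpha f=0\}$ and $A(f)=Q/\operatorname{Ann}_Q(f)$, a graded Artinian Gorenstein algebra with graded pieces $A_i$, $i=0,\dots,d$. For a set $B_k=\{\alpha_1,\dots,\alpha_m\}$ of homogeneous elements of degree $k$ of $Q$ and a polynomial $g$, the $k$-th Hessian matrix $\bm H_{B_k}(g)$ is the $m\times m$ polynomial matrix with $(i,j)$-entry $(\alpha_i\alpha_j)g$. *)

From HB Require Import structures.
From mathcomp Require Import all_boot all_order all_algebra.
From mathcomp Require Import mpoly.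
From mathcomp Require Import Rstruct.
From Stdlib Require Rdefinitions.
Notation R := Rdefinitions.R.
Set Implicit Arguments. Unset Strict Implicit. Unset Printing Implicit Defensive.
Import GRing.Theory.
Local Open Scope ring_scope.

(* Polynomials R[x_1..x_n] and the ring Q = R[d_1..d_n] are both modelled by
   {mpoly R[n]} (R = Stdlib reals); the action of alpha in Q on g is by
   differentiation: the monomial d^m acts as the partial derivative mderivm m. *)
Definition Rpoly (n : nat) := {mpoly R[n]}.

Definition dact (n : nat) (alpha g : {mpoly R[n]}) : {mpoly R[n]} :=
  \sum_(m <- msupp alpha) alpha@_m *: mderivm m g.

Definition inAnn (n : nat) (f alpha : {mpoly R[n]}) : Prop := dact alpha f = 0.

(* The images of alpha_1..alpha_m in A_k = Q_k / Ann_Q(f)_k form an R-basis: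
   each alpha_i is homogeneous of degree k; they span A_k modulo Ann; and they
   are linearly independent modulo Ann. *)
Definition is_basis_Ak (n : nat) (f : {mpoly R[n]}) (k m : nat)
    (alpha : 'I_m -> {mpoly R[n]}) : Prop :=
  [/\ forall i, alpha i \is k.-homog,
      forall beta : {mpoly R[n]}, beta \is k.-homog ->
        exists c : 'I_m -> R, inAnn f (beta - \sum_i c i *: alpha i)
    & forall c : 'I_m -> R, inAnn f (\sum_i c i *: alpha i) -> forall i, c i = 0].

Definition hessian (n : nat) (m : nat) (alpha : 'I_m -> {mpoly R[n]})
    (g : {mpoly R[n]}) : 'M[{mpoly R[n]}]_m :=
  \matrix_(i, j) dact (alpha i * alpha j) g.

Definition linform (n : nat) (a : 'I_n -> R) : {mpoly R[n]} :=
  \sum_(i < n) a i *: 'X_i.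

From HB Require Import structures.
From mathcomp Require Import all_boot all_order all_algebra.
From mathcomp Require Import mpoly ssrcomplements.
From mathcomp Require Import Rstruct.
From mathcomp Require Import zify.
Set Implicit Arguments. Unset Strict Implicit. Unset Printing Implicit Defensive.
Import GRing.Theory Num.Theory.
Local Open Scope ring_scope.

(* Write h_j = alpha_j f, homogeneous of degree d - k. Since B_k spans A_k, every
   monomial d^mu of degree k is a combination of the alpha_i modulo Ann(f), so the
   Hessian equation says sum_j F_j d^mu h_j = 0 for all |mu| = k.
   (2) With E = sum_i x_i d_i, the operator E (E - 1) ... (E - k + 1) multiplies each
   h_j by the nonzero falling factorial (d - k)^_k, and it only involves the d^mu h_j
   with |mu| = k.
   (1) xi l^(d-2k) f is homogeneous of degree k; its mu-th coefficient is, up to a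
   nonzero factor, l^(d-2k) applied to d^mu (xi f), which by Euler is a multiple of
   (d^mu (xi f))(a) = (sum_j F_j d^mu h_j)(a) = 0. *)

Section DifferentialAction.
Variable n : nat.
Implicit Types (p q g alpha beta : {mpoly R[n]}) (mu : 'X_{1..n}).

Lemma dactwE K alpha g : (msize alpha <= K)%N ->
  dact alpha g = \sum_(m : 'X_{1..n < K}) alpha@_m *: g^`M[m].
Proof.
move=> le_alpha_K; set I : subFinType _ := 'X_{1..n < K}.
rewrite /dact (big_mksub I) ?msupp_uniq //=; first last.
  by move=> x /msize_mdeg_lt /leq_trans; apply.
by rewrite big_rmcond //= => j /memN_msupp_eq0 ->; rewrite scale0r.
Qed.

Definition dactl g alpha := dact alpha g.

Lemma dactl_is_linear g : linear (dactl g).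
Proof.
move=> c p q; pose K := (msize p + msize q)%N.
have hp : (msize p <= K)%N by rewrite leq_addr.
have hq : (msize q <= K)%N by rewrite leq_addl.
have hpq : (msize (c *: p + q) <= K)%N.
  apply: leq_trans (msizeD_le _ _) _; rewrite geq_max hq andbT.
  exact: leq_trans (msizeZ_le _ _) hp.
rewrite /dactl !(dactwE g hp, dactwE g hq, dactwE g hpq) scaler_sumr -big_split.
by apply: eq_bigr => i _; rewrite mcoeffD mcoeffZ scalerDl scalerA.
Qed.
HB.instance Definition _ g := GRing.isLinear.Build R {mpoly R[n]} {mpoly R[n]} _
  (dactl g) (dactl_is_linear g).

Lemma dact_is_linear alpha : linear (dact alpha).
Proof.
move=> c p q; rewrite /dact scaler_sumr -big_split; apply: eq_bigr => i _.
by rewrite linearP scalerDr !scalerA mulrC.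
Qed.
HB.instance Definition _ alpha := GRing.isLinear.Build R {mpoly R[n]} {mpoly R[n]} _
  (dact alpha) (dact_is_linear alpha).

Lemma dact_suml (I : Type) (r : seq I) (P : pred I) (A : I -> {mpoly R[n]}) g :
  dact (\sum_(i <- r | P i) A i) g = \sum_(i <- r | P i) dact (A i) g.
Proof. exact: (raddf_sum (dactl g)). Qed.

Lemma dactZl c alpha g : dact (c *: alpha) g = c *: dact alpha g.
Proof. exact: (linearZZ (dactl g)). Qed.

Lemma dactBl alpha beta g : dact (alpha - beta) g = dact alpha g - dact beta g.
Proof. exact: (raddfB (dactl g)). Qed.

Lemma dactX mu g : dact 'X_[mu] g = g^`M[mu].
Proof. by rewrite /dact msuppX big_seq1 mcoeffX eqxx scale1r. Qed.

Lemma dact1 g : dact 1 g = g.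
Proof. by rewrite -mpolyX0 dactX mderivm0m. Qed.

Lemma dactM alpha beta g : dact (alpha * beta) g = dact alpha (dact beta g).
Proof.
rewrite [alpha]mpolyE [beta]mpolyE mulr_suml !dact_suml; apply: eq_bigr => m1 _.
rewrite mulr_sumr dact_suml dactZl dactX linear_sum scaler_sumr.
apply: eq_bigr => m2 _.
rewrite -scalerAl -scalerAr !dactZl -mpolyXD !dactX [in RHS]linearZ !scalerA.
by rewrite mulrC addmC mderivmDm.
Qed.

Lemma mderivm_dact mu alpha g : (dact alpha g)^`M[mu] = dact alpha g^`M[mu].
Proof. by rewrite -!dactX -!dactM mulrC. Qed.

Lemma mderivm_coeff0_eq0 mu p : ((p^`M[mu])@_0 == 0) = (p@_mu == 0).
Proof.
rewrite mcoeff_mderivm addm0 mulrn_eq0 orbC; case: eqP => //= _.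
by apply/negbTE; rewrite -lt0n; apply: prodn_gt0 => i; rewrite ffact_gt0.
Qed.

Lemma mderivm_homog mu p b : p \is b.-homog -> p^`M[mu] \is (b - mdeg mu).-homog.
Proof.
move=> hp; apply/dhomogP => m' hm'.
rewrite mcoeff_msupp mcoeff_mderivm in hm'.
have : p@_(mu + m') != 0 by apply: contraNneq hm' => ->; rewrite mul0rn.
by rewrite -mcoeff_msupp => /(dhomog_mf hp); rewrite /= mdegD => <-; rewrite addKn.
Qed.

Lemma dact_homog alpha p ea b : alpha \is ea.-homog -> p \is b.-homog ->
  dact alpha p \is (b - ea).-homog.
Proof.
move=> ha hp; rewrite /dact big_seq; apply: rpred_sum => m hm.
by apply: rpredZ; rewrite -(dhomog_mf ha hm); apply: mderivm_homog.
Qed.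

Lemma dhomog0E p : p \is 0%N.-homog -> p = (p@_0)%:MP.
Proof.
move=> hp; apply/mpolyP => m; rewrite mcoeffC.
have [->|nm] := eqVneq m 0%MM; first by rewrite mulr1.
by rewrite mulr0; apply: (dhomog_nemf_coeff hp); rewrite /= mdeg_eq0.
Qed.

Lemma euler_mpolyX mu :
  \sum_(i < n) 'X_i * ('X_[mu] : {mpoly R[n]})^`M(i) = (mdeg mu)%:R *: 'X_[mu].
Proof.
rewrite mdegE natr_sum scaler_suml; apply: eq_bigr => i _.
rewrite mderivX -scalerAr -mpolyXD.
have [->|hi] := eqVneq (mu i) 0%N; first by rewrite !scale0r.
congr (_ *: 'X_[_]); rewrite addmC submK //; apply/mnm_lepP => j.
by rewrite mnm1E; case: eqP => // <-; rewrite lt0n.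
Qed.

Lemma euler_dhomog p e : p \is e.-homog -> \sum_(i < n) 'X_i * p^`M(i) = e%:R *: p.
Proof.
move=> hp; rewrite [in LHS](mpolyE p).
under eq_bigr do rewrite raddf_sum mulr_sumr.
rewrite exchange_big [in RHS](mpolyE p) scaler_sumr !big_seq; apply: eq_bigr => m hm.
under eq_bigr do rewrite /= mderivZ -scalerAr.
by rewrite -scaler_sumr euler_mpolyX (dhomog_mf hp hm) !scalerA mulrC.
Qed.

(* The operator sum_(|mu| = k) (k!/mu!) x^mu d^mu, i.e. E (E - 1) ... (E - k + 1)
   for Euler's operator E, rather than E^k. *)
Fixpoint euler_iter (k : nat) g : {mpoly R[n]} :=
  if k is k'.+1 then \sum_(i < n) 'X_i * euler_iter k' g^`M(i) else g.

Lemma euler_iter_dhomog k e g : g \is e.-homog -> euler_iter k g = (e ^_ k)%:R *: g.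
Proof.
elim: k e g => [|k ih] e g hg /=; first by rewrite ffactn0 scale1r.
have hd i : g^`M(i) \is e.-1.-homog.
  by rewrite -mderivmU1m; have := mderivm_homog U_(i) hg; rewrite mdeg1 subn1.
under eq_bigr do rewrite (ih _ _ (hd _)) -scalerAr.
by rewrite -scaler_sumr (euler_dhomog hg) scalerA -natrM mulnC -ffactnS.
Qed.

Lemma lincomb_euler_iter_eq0 M (c h : 'I_M -> {mpoly R[n]}) k mu0 :
  (forall mu, mdeg mu = k -> \sum_j c j * (h j)^`M[mu0 + mu] = 0) ->
  \sum_j c j * euler_iter k (h j)^`M[mu0] = 0.
Proof.
elim: k mu0 => [|k ih] mu0 hvan /=; first by rewrite -[mu0]addm0 hvan ?mdeg0.
under eq_bigr do rewrite mulr_sumr.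
rewrite exchange_big big1 // => i _.
under eq_bigr do rewrite mulrCA -mderivmU1m -mderivmDm.
rewrite -mulr_sumr ih ?mulr0 // => mu hmu.
by rewrite -addmA hvan // mdegD mdeg1 hmu.
Qed.

Lemma lincomb_eq0_of_derivs M (c h : 'I_M -> {mpoly R[n]}) e k :
  (k <= e)%N -> (forall j, h j \is e.-homog) ->
  (forall mu, mdeg mu = k -> \sum_j c j * (h j)^`M[mu] = 0) ->
  \sum_j c j * h j = 0.
Proof.
move=> le_ke hh hvan.
have hvan0 mu : mdeg mu = k -> \sum_j c j * (h j)^`M[0 + mu] = 0.
  by rewrite add0m; apply: hvan.
have := lincomb_euler_iter_eq0 hvan0.
under eq_bigr do rewrite mderivm0m (euler_iter_dhomog k (hh _)) -scalerAr.
rewrite -scaler_sumr => /eqP; rewrite scaler_eq0 pnatr_eq0 eqn0Ngt ffact_gt0 le_ke.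
by move/eqP.
Qed.

Lemma linform_homog (a : 'I_n -> R) : linform a \is 1%N.-homog.
Proof.
by apply: rpred_sum => i _; apply: rpredZ; rewrite dhomogX /= mdeg1.
Qed.

Lemma dact_linform (a : 'I_n -> R) q : dact (linform a) q = \sum_i a i *: q^`M(i).
Proof.
rewrite dact_suml; apply: eq_bigr => i _.
by rewrite dactZl dactX mderivmU1m.
Qed.

(* l q is the derivative of q in direction a, so by Euler's identity (l q)(a) = e q(a). *)
Lemma dact_linform_exp_coeff0 (a : 'I_n -> R) e q : q \is e.-homog ->
  (dact (linform a ^+ e) q)@_0 = e`!%:R * q.@[a].
Proof.
elim: e q => [|e ih] q hq.
  by rewrite expr0 dact1 fact0 mul1r {2}(dhomog0E hq) mevalC.
have hl : dact (linform a) q \is e.-homog.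
  by have := dact_homog (linform_homog a) hq; rewrite subn1.
rewrite exprSr dactM (ih _ hl) dact_linform raddf_sum.
have := congr1 (meval a) (euler_dhomog hq); rewrite mevalZ raddf_sum.
rewrite factS natrM -mulrA mulrCA => <-; congr (_ * _).
by apply: eq_bigr => i _; rewrite /= mevalM mevalXU mevalZ.
Qed.

Lemma dact_linform_exp_eq0 (a : 'I_n -> R) e k q : q \is (e + k).-homog ->
  (forall mu, mdeg mu = k -> (q^`M[mu]).@[a] = 0) ->
  dact (linform a ^+ e) q = 0.
Proof.
move=> hq hvan; apply/mpolyP => mu; rewrite mcoeff0.
have [hmu|hmu] := eqVneq (mdeg mu) k; last first.
  apply: (dhomog_nemf_coeff (dact_homog (dhomogMn e (linform_homog a)) hq)).
  by rewrite mul1n addnC addnK.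
have hqmu : q^`M[mu] \is e.-homog by have := mderivm_homog mu hq; rewrite hmu addnK.
apply/eqP; rewrite -mderivm_coeff0_eq0 mderivm_dact.
by rewrite dact_linform_exp_coeff0 // hvan ?mulr0.
Qed.

Lemma hessian_kernel_derivs k m f (alpha : 'I_m -> {mpoly R[n]}) (F : 'cV_m) :
  (forall beta, beta \is k.-homog ->
     exists c : 'I_m -> R, inAnn f (beta - \sum_i c i *: alpha i)) ->
  hessian alpha f *m F = 0 ->
  forall mu, mdeg mu = k -> \sum_j F j 0 * (dact (alpha j) f)^`M[mu] = 0.
Proof.
move=> hspan hH mu hmu.
have hHij i : \sum_j dact (alpha i * alpha j) f * F j 0 = 0.
  have := congr1 (fun M : 'M_(m, 1) => M i 0) hH.
  by rewrite !mxE; under eq_bigr do rewrite mxE.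
have hXmu : ('X_[mu] : {mpoly R[n]}) \is k.-homog by rewrite dhomogX /= hmu.
have [c] := hspan _ hXmu.
rewrite /inAnn dactBl => /subr0_eq hc.
have hderiv j : (dact (alpha j) f)^`M[mu] = \sum_i c i *: dact (alpha i * alpha j) f.
  rewrite mderivm_dact -dactX hc -dactM mulr_sumr dact_suml.
  by apply: eq_bigr => i _; rewrite -scalerAr dactZl mulrC.
under eq_bigr do rewrite hderiv mulr_sumr.
rewrite exchange_big big1 // => i _.
under eq_bigr do rewrite -scalerAr mulrC.
by rewrite -scaler_sumr hHij scaler0.
Qed.

End DifferentialAction.

Theorem mainTheorem1 (n d k m : nat) (f : {mpoly R[n]})
    (alpha : 'I_m -> {mpoly R[n]}) (F : 'cV[{mpoly R[n]}]_m) :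
  f \is d.-homog ->
  (k <= d./2)%N ->
  is_basis_Ak f k alpha ->
  hessian alpha f *m F = 0 ->
  (forall a : 'I_n -> R,
     let l := linform a in
     let xi := \sum_(i < m) (F i 0).@[a] *: alpha i in
     inAnn f (xi * l ^+ (d - 2 * k)))
  /\ \sum_(i < m) F i 0 * dact (alpha i) f = 0.
Proof.
move=> hf hk [hA hspan _] hH.
have le_k_dk : (k <= d - k)%N by move: hk; rewrite geq_half_double; lia.
have hh j : dact (alpha j) f \is (d - k).-homog := dact_homog (hA j) hf.
have hvan := hessian_kernel_derivs hspan hH.
split; last exact: lincomb_eq0_of_derivs le_k_dk hh hvan.
move=> a l xi; rewrite /inAnn mulrC dactM.
apply: (@dact_linform_exp_eq0 _ _ _ k).
  have hxi : xi \is k.-homog by apply: rpred_sum => i _; apply/rpredZ/hA.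
  by rewrite (_ : (d - 2 * k + k = d - k)%N); [exact: dact_homog hf | lia].
move=> mu hmu; rewrite -[RHS](meval0 a) -(hvan mu hmu) /xi dact_suml !raddf_sum.
by apply: eq_bigr => j _; rewrite /= dactZl mderivmZ mevalZ mevalM.
Qed.
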